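(* For any integer $m\ge 1$ and all $z,\xi\in\mathbb{B}_N$, $$\big(|E_\xi+m|^2-\Delta_\xi\big)\cdots\big(|E_\xi+1|^2-\Delta_\xi\big)\big(|E_\xi|^2-\Delta_\xi\big)\Big\{\frac{1}{|1-\langle z,\xi\rangle|^2}\Big\}=|E_z|^2\Big\{\frac{(m!)^2(1-|z|^2)^{m+1}}{|1-\langle z,\xi\rangle|^{2(m+1)}}\Big\},$$ and $$\big(|E_\xi+m|^2-\Delta_\xi\big)\cdots\big(|E_\xi|^2-\Delta_\xi\big)\Big\{\frac{1-|\xi|^2}{|1-\langle z,\xi\rangle|^2}\Big\}=\big(|E_z|^2-\Delta_z\big)\Big\{\frac{(m!)^2(1-|z|^2)^{m+1}}{|1-\langle z,\xi\rangle|^{2(m+1)}}\Big\}.$$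
   Context: $\mathbb{B}_N$ is the unit ball of $\mathbb{C}^N$ and $\langle z,\xi\rangle=\sum_j z_j\bar\xi_j$. The operators are $E_z=\sum_{j=1}^N z_j\partial/\partial z_j$, $\bar E_z=\sum_{j=1}^N\bar z_j\partial/\partial\bar z_j$, $\Delta_z=\sum_{j=1}^N\partial^2/\partial z_j\partial\bar z_j$, and for a real number $s$, $|E_z+s|^2=(E_z+s)(\bar E_z+s)$; subscripts $\xi$ denote the same operators acting in the variable $\xi$. Products of operators denote composition. *)

From Stdlib Require Import Reals Factorial.
From Coquelicot Require Import Coquelicot.

(* A point of C^N is represented as a function nat -> C; only the coordinates
   j < N are relevant (all sums below range over j < N). *)
Definition vec := nat -> C.

Fixpoint Csum (N : nat) (f : nat -> C) : C :=
  match N with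
  | O => RtoC 0
  | S n => Cplus (Csum n f) (f n)
  end.

Definition cinner (N : nat) (z xi : vec) : C :=
  Csum N (fun j => Cmult (z j) (Cconj (xi j))).

Definition cnorm2 (N : nat) (z : vec) : R :=
  Re (Csum N (fun j => RtoC (Cmod (z j) ^ 2))).

Definition inBall (N : nat) (z : vec) : Prop := cnorm2 N z < 1.

Definition upd (z : vec) (j : nat) (w : C) : vec :=
  fun k => if Nat.eqb k j then w else z k.

(* real partial derivatives w.r.t. x_j and y_j, where z_j = x_j + i y_j *)
Definition dx (j : nat) (F : vec -> C) : vec -> C := fun z =>
  (Derive (fun t => fst (F (upd z j (t, snd (z j))))) (fst (z j)),
   Derive (fun t => snd (F (upd z j (t, snd (z j))))) (fst (z j))).
Definition dy (j : nat) (F : vec -> C) : vec -> C := fun z =>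
  (Derive (fun t => fst (F (upd z j (fst (z j), t)))) (snd (z j)),
   Derive (fun t => snd (F (upd z j (fst (z j), t)))) (snd (z j))).

Definition dz (j : nat) (F : vec -> C) : vec -> C := fun z =>
  Cmult (RtoC (/2)) (Cminus (dx j F z) (Cmult Ci (dy j F z))).
Definition dzb (j : nat) (F : vec -> C) : vec -> C := fun z =>
  Cmult (RtoC (/2)) (Cplus (dx j F z) (Cmult Ci (dy j F z))).

Definition Eop (N : nat) (F : vec -> C) : vec -> C := fun z =>
  Csum N (fun j => Cmult (z j) (dz j F z)).
Definition Ebop (N : nat) (F : vec -> C) : vec -> C := fun z =>
  Csum N (fun j => Cmult (Cconj (z j)) (dzb j F z)).
Definition Lap (N : nat) (F : vec -> C) : vec -> C := fun z =>
  Csum N (fun j => dz j (dzb j F) z).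

(* |E + s|^2 = (E + s)(Ebar + s) *)
Definition absEs (N : nat) (s : R) (F : vec -> C) : vec -> C :=
  let G := fun z => Cplus (Ebop N F z) (Cmult (RtoC s) (F z)) in
  fun z => Cplus (Eop N G z) (Cmult (RtoC s) (G z)).

Definition Lop (N : nat) (s : R) (F : vec -> C) : vec -> C := fun z =>
  Cminus (absEs N s F z) (Lap N F z).

Fixpoint Lchain (N : nat) (m : nat) (F : vec -> C) : vec -> C :=
  match m with
  | O => Lop N 0 F
  | S k => Lop N (INR (S k)) (Lchain N k F)
  end.

(* Fix [zeta] and consider, as functions of [x], a = 1 - <x,zeta>, its conjugate
   b = 1 - <zeta,x>, and r = 1 - |x|^2.  Since E a = a - 1, E b = 0, E r = r - 1 (and
   symmetrically for Ebar), while the mixed second derivatives of a, b, r are constants,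
   the operators E, Ebar and Delta map every a^-p b^-q r^n to an explicit finite
   combination of functions of the same kind.  Each left-hand side is therefore such a
   combination, computed in closed form by induction on the length of the chain; each
   right-hand side is another one (in the variable z, with the roles of z and xi
   exchanged), and the two agree as rational functions of the quantities involved.
   Derivatives only see values near the point, so it is enough that the functions agree
   on the open set where a <> 0, which contains the ball. *)

From Stdlib Require Import Reals Factorial Lra Lia FunctionalExtensionality List.
From Coquelicot Require Import Coquelicot.
Import ListNotations.

Set Bullet Behavior "Strict Subproofs".
Open Scope C_scope.

Lemma is_derive_val (f : R -> R) x l l' : l = l' -> is_derive f x l -> is_derive f x l'.
Proof. intros ->; auto. Qed.

Definition is_Cderive (h : R -> C) (t : R) (l : C) : Prop :=
  is_derive (fun s => fst (h s)) t (fst l) /\ is_derive (fun s => snd (h s)) t (snd l).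

Lemma is_Cderive_ext h g t l :
  (forall s, h s = g s) -> is_Cderive h t l -> is_Cderive g t l.
Proof.
  intros E [D1 D2]; split; eapply is_derive_ext; eauto; intros s; simpl; rewrite E; auto.
Qed.

Lemma is_Cderive_val h t l l' : l = l' -> is_Cderive h t l -> is_Cderive h t l'.
Proof. intros ->; auto. Qed.

Lemma is_Cderive_const (c : C) t : is_Cderive (fun _ => c) t 0.
Proof. split; simpl; exact (is_derive_const _ _). Qed.

Lemma is_Cderive_re (y t : R) : is_Cderive (fun s => (s, y)) t 1.
Proof. split; simpl; [exact (is_derive_id _) | exact (is_derive_const _ _)]. Qed.

Lemma is_Cderive_im (x t : R) : is_Cderive (fun s => (x, s)) t Ci.
Proof. split; simpl; [exact (is_derive_const _ _) | exact (is_derive_id _)]. Qed.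

Lemma is_Cderive_plus h g t l1 l2 :
  is_Cderive h t l1 -> is_Cderive g t l2 -> is_Cderive (fun s => h s + g s) t (l1 + l2).
Proof.
  intros [D1 D2] [D3 D4]; split;
    [exact (is_derive_plus _ _ _ _ _ D1 D3) | exact (is_derive_plus _ _ _ _ _ D2 D4)].
Qed.

Lemma is_Cderive_minus h g t l1 l2 :
  is_Cderive h t l1 -> is_Cderive g t l2 -> is_Cderive (fun s => h s - g s) t (l1 - l2).
Proof.
  intros [D1 D2] [D3 D4]; split; eapply is_derive_val.
  2: exact (is_derive_minus _ _ _ _ _ D1 D3).
  3: exact (is_derive_minus _ _ _ _ _ D2 D4).
  all: simpl; unfold minus, plus, opp; simpl; ring.
Qed.

Lemma is_Cderive_mult h g t l1 l2 :
  is_Cderive h t l1 -> is_Cderive g t l2 ->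
  is_Cderive (fun s => h s * g s) t (l1 * g t + h t * l2).
Proof.
  intros [D1 D2] [D3 D4]; split; eapply is_derive_val.
  2: exact (is_derive_minus _ _ _ _ _ (is_derive_mult _ _ _ _ _ D1 D3 Rmult_comm)
                                       (is_derive_mult _ _ _ _ _ D2 D4 Rmult_comm)).
  3: exact (is_derive_plus _ _ _ _ _ (is_derive_mult _ _ _ _ _ D1 D4 Rmult_comm)
                                      (is_derive_mult _ _ _ _ _ D2 D3 Rmult_comm)).
  all: simpl; unfold minus, plus, opp, mult; simpl; ring.
Qed.

Lemma is_Cderive_inv h t l :
  is_Cderive h t l -> h t <> 0 -> is_Cderive (fun s => / h s) t (- (l / (h t * h t))).
Proof.
  intros [D1 D2] Hn.
  set (n2 := fun s => (fst (h s) ^ 2 + snd (h s) ^ 2)%R).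
  assert (Hn2 : n2 t <> 0%R).
  { unfold n2; intro E; apply Hn; destruct (h t) as [u v]; simpl in E.
    assert (u = 0%R) by nra; assert (v = 0%R) by nra; subst; reflexivity. }
  assert (Dn2 : is_derive n2 t (2 * (fst (h t) * fst l + snd (h t) * snd l))%R).
  { eapply is_derive_val;
      [| exact (is_derive_plus _ _ _ _ _ (is_derive_pow _ 2 _ _ D1) (is_derive_pow _ 2 _ _ D2))].
    unfold plus, scal, mult; simpl; ring. }
  pose proof (is_derive_inv _ _ _ Dn2 Hn2) as Dinv.
  split.
  - eapply is_derive_val; [| exact (is_derive_mult _ _ _ _ _ D1 Dinv Rmult_comm)].
    unfold n2 in *; destruct (h t) as [u v], l as [p q]; simpl in *.
    unfold plus, mult, opp; simpl. field. nra.
  - eapply is_derive_val;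
      [| exact (is_derive_mult _ _ _ _ _ (is_derive_opp _ _ _ D2) Dinv Rmult_comm)].
    unfold n2 in *; destruct (h t) as [u v], l as [p q]; simpl in *.
    unfold plus, mult, opp; simpl. field. nra.
Qed.

(** * Wirtinger derivatives *)

(* [P] and [Q] are dH/dw and dH/dwbar at [w], recorded through
   dH/dx = P + Q and dH/dy = i (P - Q). *)
Definition is_wirtinger (H : C -> C) (w P Q : C) : Prop :=
  is_Cderive (fun t => H (t, snd w)) (fst w) (P + Q) /\
  is_Cderive (fun t => H (fst w, t)) (snd w) (Ci * (P - Q)).

Lemma is_wirtinger_ext H G w P Q :
  (forall v, H v = G v) -> is_wirtinger H w P Q -> is_wirtinger G w P Q.
Proof. intros E [D1 D2]; split; eapply is_Cderive_ext; eauto; intros; simpl; auto. Qed.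

Lemma is_wirtinger_val H w P Q P' Q' :
  P = P' -> Q = Q' -> is_wirtinger H w P Q -> is_wirtinger H w P' Q'.
Proof. intros -> ->; auto. Qed.

Lemma is_wirtinger_const (c : C) w : is_wirtinger (fun _ => c) w 0 0.
Proof.
  split; (eapply is_Cderive_val; [| apply is_Cderive_const]);
    apply injective_projections; simpl; ring.
Qed.

Lemma is_wirtinger_id w : is_wirtinger (fun v => v) w 1 0.
Proof.
  destruct w as [x y]; split; simpl.
  - eapply is_Cderive_val; [| apply is_Cderive_re]; apply injective_projections; simpl; ring.
  - eapply is_Cderive_val; [| apply is_Cderive_im]; apply injective_projections; simpl; ring.
Qed.

Lemma is_wirtinger_conj w : is_wirtinger Cconj w 0 1.
Proof.
  destruct w as [x y]; split; split; simpl.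
  - eapply is_derive_val; [| exact (is_derive_id _)]; unfold one; simpl; ring.
  - eapply is_derive_val; [| exact (is_derive_const _ _)]; unfold zero; simpl; ring.
  - eapply is_derive_val; [| exact (is_derive_const _ _)]; unfold zero; simpl; ring.
  - eapply is_derive_val; [| exact (is_derive_opp _ _ _ (is_derive_id _))].
    unfold opp, one; simpl; ring.
Qed.

Lemma is_wirtinger_plus H G w P1 Q1 P2 Q2 :
  is_wirtinger H w P1 Q1 -> is_wirtinger G w P2 Q2 ->
  is_wirtinger (fun v => H v + G v) w (P1 + P2) (Q1 + Q2).
Proof.
  intros [D1 D2] [D3 D4]; split; (eapply is_Cderive_val; [| apply is_Cderive_plus; eauto]); ring.
Qed.

Lemma is_wirtinger_minus H G w P1 Q1 P2 Q2 :
  is_wirtinger H w P1 Q1 -> is_wirtinger G w P2 Q2 ->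
  is_wirtinger (fun v => H v - G v) w (P1 - P2) (Q1 - Q2).
Proof.
  intros [D1 D2] [D3 D4]; split; (eapply is_Cderive_val; [| apply is_Cderive_minus; eauto]); ring.
Qed.

Lemma is_wirtinger_mult H G w P1 Q1 P2 Q2 :
  is_wirtinger H w P1 Q1 -> is_wirtinger G w P2 Q2 ->
  is_wirtinger (fun v => H v * G v) w (P1 * G w + H w * P2) (Q1 * G w + H w * Q2).
Proof.
  destruct w as [x y]; intros [D1 D2] [D3 D4]; split;
    (eapply is_Cderive_val; [| apply is_Cderive_mult; eauto]); simpl; ring.
Qed.

Lemma is_wirtinger_inv H w P Q :
  is_wirtinger H w P Q -> H w <> 0 ->
  is_wirtinger (fun v => / H v) w (- (P / (H w * H w))) (- (Q / (H w * H w))).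
Proof.
  destruct w as [x y]; intros [D1 D2] Hn; simpl in *; split;
    (eapply is_Cderive_val; [| apply is_Cderive_inv; eauto]); simpl; field; auto.
Qed.

Lemma is_wirtinger_pow H w P Q n :
  is_wirtinger H w P Q ->
  is_wirtinger (fun v => H v ^ n) w (INR n * (H w ^ pred n * P)) (INR n * (H w ^ pred n * Q)).
Proof.
  intros D; induction n as [| n IH].
  - cbn [Cpow]; eapply is_wirtinger_val; [| | apply is_wirtinger_const]; rewrite INR_0; ring.
  - cbn [Cpow]; eapply is_wirtinger_val; [| | apply (is_wirtinger_mult _ _ _ _ _ _ _ D IH)];
      rewrite S_INR, RtoC_plus; destruct n; cbn [pred Cpow]; rewrite ?INR_0; ring.
Qed.

Lemma dz_dzb_of_wirtinger (F : vec -> C) x j P Q :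
  is_wirtinger (fun w => F (upd x j w)) (x j) P Q -> dz j F x = P /\ dzb j F x = Q.
Proof.
  intros [[D1 D2] [D3 D4]].
  assert (Ex : dx j F x = P + Q).
  { unfold dx.
    replace (Derive _ _) with (fst (P + Q)) by (symmetry; apply is_derive_unique; exact D1).
    replace (Derive _ _) with (snd (P + Q)) by (symmetry; apply is_derive_unique; exact D2).
    destruct (P + Q); reflexivity. }
  assert (Ey : dy j F x = Ci * (P - Q)).
  { unfold dy.
    replace (Derive _ _) with (fst (Ci * (P - Q))) by (symmetry; apply is_derive_unique; exact D3).
    replace (Derive _ _) with (snd (Ci * (P - Q))) by (symmetry; apply is_derive_unique; exact D4).
    destruct (Ci * (P - Q)); reflexivity. }
  unfold dz, dzb; rewrite Ex, Ey; destruct P, Q; split;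
    apply injective_projections; simpl; field.
Qed.

Lemma upd_same x j : upd x j (x j) = x.
Proof.
  apply functional_extensionality; intro k; unfold upd.
  destruct (Nat.eqb_spec k j); subst; auto.
Qed.

Lemma upd_eq x j w : upd x j w j = w.
Proof. unfold upd; rewrite Nat.eqb_refl; auto. Qed.

Lemma upd_neq x j w k : k <> j -> upd x j w k = x k.
Proof. intros H; unfold upd; destruct (Nat.eqb_spec k j); tauto. Qed.

Lemma Csum_ext N f g : (forall k, (k < N)%nat -> f k = g k) -> Csum N f = Csum N g.
Proof. induction N; simpl; intros H; auto. rewrite IHN, H; auto. Qed.

Lemma Csum_plus N f g : Csum N (fun k => f k + g k) = Csum N f + Csum N g.
Proof. induction N; simpl; [ring | rewrite IHN; ring]. Qed.

Lemma Csum_scal N c f : Csum N (fun k => c * f k) = c * Csum N f.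
Proof. induction N; simpl; [ring | rewrite IHN; ring]. Qed.

Lemma Csum_0 N : Csum N (fun _ => 0) = 0.
Proof. induction N; simpl; auto. rewrite IHN; ring. Qed.

Lemma Csum_const N c : Csum N (fun _ => c) = INR N * c.
Proof. induction N; cbn [Csum]; [rewrite INR_0 | rewrite IHN, S_INR, RtoC_plus]; ring. Qed.

Lemma Csum_conj N f : Cconj (Csum N f) = Csum N (fun k => Cconj (f k)).
Proof.
  induction N; simpl.
  - apply injective_projections; simpl; ring.
  - rewrite Cplus_conj, IHN; auto.
Qed.

Lemma Csum_upd N (f : nat -> C -> C) x j w : (j < N)%nat ->
  Csum N (fun k => f k (upd x j w k)) = Csum N (fun k => f k (x k)) - f j (x j) + f j w.
Proof.
  induction N; intros H; [lia |]; simpl.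
  destruct (Nat.eq_dec j N).
  - subst; rewrite upd_eq.
    rewrite (Csum_ext N (fun k => f k (upd x N w k)) (fun k => f k (x k))); [ring |].
    intros k Hk; rewrite upd_neq; auto; lia.
  - rewrite IHN, upd_neq by lia; ring.
Qed.

Fixpoint lsum {A : Type} (f : A -> C) (l : list A) : C :=
  match l with
  | nil => 0
  | a :: l' => f a + lsum f l'
  end.

Lemma lsum_app {A} (f : A -> C) l1 l2 : lsum f (l1 ++ l2) = lsum f l1 + lsum f l2.
Proof. induction l1; simpl; [| rewrite IHl1]; ring. Qed.

Lemma lsum_map {A B} (f : B -> C) (g : A -> B) l : lsum f (map g l) = lsum (fun a => f (g a)) l.
Proof. induction l; simpl; [| rewrite IHl]; auto. Qed.

Lemma lsum_flat_map {A B} (f : B -> C) (g : A -> list B) l :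
  lsum f (flat_map g l) = lsum (fun a => lsum f (g a)) l.
Proof. induction l; simpl; [| rewrite lsum_app, IHl]; auto. Qed.

Lemma lsum_scal {A} c (f : A -> C) l : c * lsum f l = lsum (fun a => c * f a) l.
Proof. induction l; simpl; [| rewrite <- IHl]; ring. Qed.

Lemma lsum_ext {A} (f g : A -> C) l : (forall a, f a = g a) -> lsum f l = lsum g l.
Proof. intros E; induction l; simpl; [| rewrite E, IHl]; auto. Qed.

Lemma Csum_lsum {A} N (f : nat -> A -> C) l :
  Csum N (fun j => lsum (f j) l) = lsum (fun a => Csum N (fun j => f j a)) l.
Proof.
  induction l; simpl.
  - apply Csum_0.
  - rewrite Csum_plus, IHl; auto.
Qed.

Lemma is_wirtinger_lsum {A} (H : A -> C -> C) w P Q l :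
  (forall a, is_wirtinger (H a) w (P a) (Q a)) ->
  is_wirtinger (fun v => lsum (fun a => H a v) l) w (lsum P l) (lsum Q l).
Proof.
  intros D; induction l; simpl.
  - apply is_wirtinger_const.
  - apply is_wirtinger_plus; auto.
Qed.

(** * Locality of the differential operators *)

Lemma Cmod_sub_re (t t0 y : R) : Cmod ((t, y) - (t0, y)) = Rabs (t - t0).
Proof.
  unfold Cmod; simpl; rewrite <- sqrt_Rsqr_abs; f_equal; unfold Rsqr; ring.
Qed.

Lemma Cmod_sub_im (t t0 x : R) : Cmod ((x, t) - (x, t0)) = Rabs (t - t0).
Proof.
  unfold Cmod; simpl; rewrite <- sqrt_Rsqr_abs; f_equal; unfold Rsqr; ring.
Qed.

Definition agree_on (D : vec -> Prop) (F G : vec -> C) : Prop := forall x, D x -> F x = G x.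

Section Locality.

Variable N : nat.
Variable D : vec -> Prop.

(* [dx] and [dy] differentiate along complex coordinate lines, so openness of [D] along
   these lines is all that is needed. *)
Hypothesis D_open : forall x j, D x -> (j < N)%nat ->
  exists eps, (0 < eps)%R /\ forall w, (Cmod (w - x j) < eps)%R -> D (upd x j w).

Lemma agree_on_dx F G j : (j < N)%nat -> agree_on D F G -> agree_on D (dx j F) (dx j G).
Proof.
  intros Hj H x Dx; destruct (D_open x j Dx Hj) as [e [He Hn]].
  assert (L : locally (fst (x j))
                (fun t => F (upd x j (t, snd (x j))) = G (upd x j (t, snd (x j))))).
  { exists (mkposreal e He); intros t Ht; apply H, Hn.
    destruct (x j) as [a b]; rewrite Cmod_sub_re; exact Ht. }
  unfold dx; f_equal; apply Derive_ext_loc; eapply filter_imp; try exact L;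
    intros t Et; [exact (f_equal fst Et) | exact (f_equal snd Et)].
Qed.

Lemma agree_on_dy F G j : (j < N)%nat -> agree_on D F G -> agree_on D (dy j F) (dy j G).
Proof.
  intros Hj H x Dx; destruct (D_open x j Dx Hj) as [e [He Hn]].
  assert (L : locally (snd (x j))
                (fun t => F (upd x j (fst (x j), t)) = G (upd x j (fst (x j), t)))).
  { exists (mkposreal e He); intros t Ht; apply H, Hn.
    destruct (x j) as [a b]; rewrite Cmod_sub_im; exact Ht. }
  unfold dy; f_equal; apply Derive_ext_loc; eapply filter_imp; try exact L;
    intros t Et; [exact (f_equal fst Et) | exact (f_equal snd Et)].
Qed.

Lemma agree_on_dz F G j : (j < N)%nat -> agree_on D F G -> agree_on D (dz j F) (dz j G).
Proof.
  intros Hj H x Dx; unfold dz.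
  rewrite (agree_on_dx F G j Hj H x Dx), (agree_on_dy F G j Hj H x Dx); auto.
Qed.

Lemma agree_on_dzb F G j : (j < N)%nat -> agree_on D F G -> agree_on D (dzb j F) (dzb j G).
Proof.
  intros Hj H x Dx; unfold dzb.
  rewrite (agree_on_dx F G j Hj H x Dx), (agree_on_dy F G j Hj H x Dx); auto.
Qed.

Lemma agree_on_Eop F G : agree_on D F G -> agree_on D (Eop N F) (Eop N G).
Proof.
  intros H x Dx; apply Csum_ext; intros j Hj; rewrite (agree_on_dz F G j Hj H x Dx); auto.
Qed.

Lemma agree_on_Ebop F G : agree_on D F G -> agree_on D (Ebop N F) (Ebop N G).
Proof.
  intros H x Dx; apply Csum_ext; intros j Hj; rewrite (agree_on_dzb F G j Hj H x Dx); auto.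
Qed.

Lemma agree_on_Lap F G : agree_on D F G -> agree_on D (Lap N F) (Lap N G).
Proof.
  intros H x Dx; apply Csum_ext; intros j Hj.
  exact (agree_on_dz _ _ j Hj (agree_on_dzb F G j Hj H) x Dx).
Qed.

Lemma agree_on_absEs s F G : agree_on D F G -> agree_on D (absEs N s F) (absEs N s G).
Proof.
  intros H x Dx; unfold absEs; cbv zeta.
  assert (HG : agree_on D (fun y => Ebop N F y + s * F y) (fun y => Ebop N G y + s * G y)).
  { intros y Dy; rewrite (agree_on_Ebop F G H y Dy), (H y Dy); auto. }
  rewrite (agree_on_Eop _ _ HG x Dx), (HG x Dx); auto.
Qed.

End Locality.

(** * The functions (1 - <x,zeta>)^-p (1 - <zeta,x>)^-q (1 - |x|^2)^n *)

Definition one_sub_inner (N : nat) (x y : vec) : C := 1 - cinner N x y.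

Lemma one_sub_inner_conj N x y : Cconj (one_sub_inner N x y) = one_sub_inner N y x.
Proof.
  unfold one_sub_inner, cinner; rewrite Cminus_conj, Csum_conj; f_equal.
  - apply injective_projections; simpl; ring.
  - apply Csum_ext; intros; rewrite Cmult_conj, Cconj_conj; ring.
Qed.

Lemma one_sub_inner_upd_l N x y j w : (j < N)%nat ->
  one_sub_inner N (upd x j w) y = one_sub_inner N x y - (w - x j) * Cconj (y j).
Proof.
  intros Hj; unfold one_sub_inner, cinner.
  rewrite (Csum_upd N (fun k v => v * Cconj (y k))) by exact Hj; ring.
Qed.

Lemma one_sub_inner_upd_r N x y j w : (j < N)%nat ->
  one_sub_inner N y (upd x j w) = one_sub_inner N y x - y j * (Cconj w - Cconj (x j)).
Proof.
  intros Hj; unfold one_sub_inner, cinner.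
  rewrite (Csum_upd N (fun k v => y k * Cconj v)) by exact Hj; ring.
Qed.

Lemma one_sub_inner_upd_diag N x j w : (j < N)%nat ->
  one_sub_inner N (upd x j w) (upd x j w)
  = one_sub_inner N x x + x j * Cconj (x j) - w * Cconj w.
Proof.
  intros Hj; unfold one_sub_inner, cinner.
  rewrite (Csum_upd N (fun k v => v * Cconj v)) by exact Hj; ring.
Qed.

Lemma is_wirtinger_one_sub_inner_l N x y j : (j < N)%nat ->
  is_wirtinger (fun w => one_sub_inner N (upd x j w) y) (x j) (- Cconj (y j)) 0.
Proof.
  intros Hj; eapply is_wirtinger_ext.
  { intros v; symmetry; apply one_sub_inner_upd_l, Hj. }
  eapply is_wirtinger_val; [| | apply is_wirtinger_minus;
    [apply is_wirtinger_const | apply is_wirtinger_mult;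
      [apply is_wirtinger_minus; [apply is_wirtinger_id | apply is_wirtinger_const]
      | apply is_wirtinger_const]]]; cbv beta; ring.
Qed.

Lemma is_wirtinger_one_sub_inner_r N x y j : (j < N)%nat ->
  is_wirtinger (fun w => one_sub_inner N y (upd x j w)) (x j) 0 (- y j).
Proof.
  intros Hj; eapply is_wirtinger_ext.
  { intros v; symmetry; apply one_sub_inner_upd_r, Hj. }
  eapply is_wirtinger_val; [| | apply is_wirtinger_minus;
    [apply is_wirtinger_const | apply is_wirtinger_mult;
      [apply is_wirtinger_const | apply is_wirtinger_minus;
        [apply is_wirtinger_conj | apply is_wirtinger_const]]]]; cbv beta; ring.
Qed.

Lemma is_wirtinger_one_sub_inner_diag N x j : (j < N)%nat ->
  is_wirtinger (fun w => one_sub_inner N (upd x j w) (upd x j w)) (x j) (- Cconj (x j)) (- x j).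
Proof.
  intros Hj; eapply is_wirtinger_ext.
  { intros v; symmetry; apply one_sub_inner_upd_diag, Hj. }
  eapply is_wirtinger_val; [| | apply is_wirtinger_minus;
    [apply is_wirtinger_const
    |apply is_wirtinger_mult; [apply is_wirtinger_id | apply is_wirtinger_conj]]];
    cbv beta; ring.
Qed.

Lemma one_sub_inner_neq0_near N x y j : one_sub_inner N x y <> 0 -> (j < N)%nat ->
  exists eps, (0 < eps)%R /\
    forall w, (Cmod (w - x j) < eps)%R -> one_sub_inner N (upd x j w) y <> 0.
Proof.
  intros Ha Hj; pose proof (Cmod_ge_0 (y j)) as Hy.
  assert (Hm : (0 < Cmod (one_sub_inner N x y))%R) by (apply Cmod_gt_0; exact Ha).
  exists (Cmod (one_sub_inner N x y) / (Cmod (y j) + 1))%R; split.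
  { apply Rdiv_lt_0_compat; lra. }
  intros w Hw E; rewrite one_sub_inner_upd_l in E by exact Hj.
  assert (Ea : one_sub_inner N x y = (w - x j) * Cconj (y j))
    by (rewrite <- (Cplus_0_r (_ * _)), <- E; ring).
  assert (Em : Cmod (one_sub_inner N x y) = (Cmod (w - x j) * Cmod (y j))%R)
    by (rewrite Ea, Cmod_mult, Cmod_conj; reflexivity).
  pose proof (Cmod_ge_0 (w - x j)).
  apply (Rmult_lt_compat_r (Cmod (y j) + 1)) in Hw; [| lra].
  unfold Rdiv in Hw; rewrite Rmult_assoc, Rinv_l in Hw by lra; nra.
Qed.

Inductive term : Type := Term (c : C) (p q n : nat).

Ltac field_nonzero := repeat split; try apply Cmult_neq_0; try apply Cpow_nz; auto.

Section Monomials.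

Variable N : nat.
Variable zeta : vec.

Definition regular (x : vec) : Prop := one_sub_inner N x zeta <> 0.

Lemma regular_conj x : regular x -> one_sub_inner N zeta x <> 0.
Proof.
  intros Hx E; apply Hx; rewrite <- one_sub_inner_conj, E.
  apply injective_projections; simpl; ring.
Qed.

Lemma regular_upd x j : regular x -> (j < N)%nat ->
  exists eps, (0 < eps)%R /\ forall w, (Cmod (w - x j) < eps)%R -> regular (upd x j w).
Proof. apply one_sub_inner_neq0_near. Qed.

Definition mono (p q n : nat) (x : vec) : C :=
  / one_sub_inner N x zeta ^ p * / one_sub_inner N zeta x ^ q * one_sub_inner N x x ^ n.

(* The junk value [pred 0 = 0] is harmless: [pred n] only occurs next to the factor [INR n]. *)
Definition dz_mono j p q n x : C :=
  INR p * Cconj (zeta j) * mono (S p) q n x - INR n * Cconj (x j) * mono p q (pred n) x.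

Definition dzb_mono j p q n x : C :=
  INR q * zeta j * mono p (S q) n x - INR n * x j * mono p q (pred n) x.

Lemma is_wirtinger_mono x j p q n : (j < N)%nat -> regular x ->
  is_wirtinger (fun w => mono p q n (upd x j w)) (x j) (dz_mono j p q n x) (dzb_mono j p q n x).
Proof.
  intros Hj Hx; pose proof (regular_conj x Hx) as Hx'.
  assert (Ha : forall k, one_sub_inner N x zeta ^ k <> 0) by (intros; apply Cpow_nz; auto).
  assert (Hb : forall k, one_sub_inner N zeta x ^ k <> 0) by (intros; apply Cpow_nz; auto).
  eapply is_wirtinger_val; [| | apply is_wirtinger_mult;
    [apply is_wirtinger_mult;
      [apply is_wirtinger_inv; [apply is_wirtinger_pow, is_wirtinger_one_sub_inner_l, Hj |]
      |apply is_wirtinger_inv; [apply is_wirtinger_pow, is_wirtinger_one_sub_inner_r, Hj |]]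
    | apply is_wirtinger_pow, is_wirtinger_one_sub_inner_diag, Hj]];
   cbv beta; rewrite ?upd_same; auto; unfold dz_mono, dzb_mono, mono.
  - destruct p as [| p], n as [| n]; cbn [Cpow pred];
      rewrite ?S_INR, ?INR_0, ?RtoC_plus; field; auto.
  - destruct q as [| q], n as [| n]; cbn [Cpow pred];
      rewrite ?S_INR, ?INR_0, ?RtoC_plus; field; auto.
Qed.


Definition eval_term (t : term) (x : vec) : C := let 'Term c p q n := t in c * mono p q n x.
Definition eval (X : list term) (x : vec) : C := lsum (fun t => eval_term t x) X.

Definition scale (a : C) (X : list term) : list term :=
  map (fun '(Term c p q n) => Term (a * c) p q n) X.

Lemma eval_app X Y x : eval (X ++ Y) x = eval X x + eval Y x.
Proof. apply lsum_app. Qed.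

Lemma eval_scale a X x : eval (scale a X) x = a * eval X x.
Proof.
  unfold eval, scale; rewrite lsum_map, lsum_scal; apply lsum_ext.
  intros [c p q n]; cbn [eval_term]; ring.
Qed.

Lemma eval_flat_map (g : term -> list term) X x :
  eval (flat_map g X) x = lsum (fun t => eval (g t) x) X.
Proof. apply lsum_flat_map. Qed.

Definition dz_term j (t : term) x : C := let 'Term c p q n := t in c * dz_mono j p q n x.
Definition dzb_term j (t : term) x : C := let 'Term c p q n := t in c * dzb_mono j p q n x.

Lemma is_wirtinger_eval X x j : (j < N)%nat -> regular x ->
  is_wirtinger (fun w => eval X (upd x j w)) (x j)
    (lsum (fun t => dz_term j t x) X) (lsum (fun t => dzb_term j t x) X).
Proof.
  intros Hj Hx; apply is_wirtinger_lsum; intros [c p q n]; cbn [eval_term dz_term dzb_term].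
  eapply is_wirtinger_val; [| | apply is_wirtinger_mult;
    [apply is_wirtinger_const | apply is_wirtinger_mono; auto]]; cbv beta; ring.
Qed.

Lemma dz_eval X x j : (j < N)%nat -> regular x ->
  dz j (eval X) x = lsum (fun t => dz_term j t x) X.
Proof. intros Hj Hx; apply (dz_dzb_of_wirtinger _ _ _ _ _ (is_wirtinger_eval X x j Hj Hx)). Qed.

Lemma dzb_eval X x j : (j < N)%nat -> regular x ->
  dzb j (eval X) x = lsum (fun t => dzb_term j t x) X.
Proof. intros Hj Hx; apply (dz_dzb_of_wirtinger _ _ _ _ _ (is_wirtinger_eval X x j Hj Hx)). Qed.

Lemma cinner_one_sub_inner x y : cinner N x y = 1 - one_sub_inner N x y.
Proof. unfold one_sub_inner; ring. Qed.

Definition E_term (t : term) : list term :=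
  let 'Term c p q n := t in
  [Term (c * INR p) (S p) q n; Term (c * (INR n - INR p)) p q n; Term (- (c * INR n)) p q (pred n)].

Definition Eb_term (t : term) : list term :=
  let 'Term c p q n := t in
  [Term (c * INR q) p (S q) n; Term (c * (INR n - INR q)) p q n; Term (- (c * INR n)) p q (pred n)].

Lemma Eop_mono p q n x : regular x ->
  Csum N (fun j => x j * dz_mono j p q n x) = eval (E_term (Term 1 p q n)) x.
Proof.
  intros Hx; pose proof (regular_conj x Hx) as Hx'.
  rewrite (Csum_ext N _ (fun j => INR p * mono (S p) q n x * (x j * Cconj (zeta j))
                                + - (INR n * mono p q (pred n) x) * (x j * Cconj (x j))))
    by (intros; unfold dz_mono; ring).
  rewrite Csum_plus, !Csum_scal; fold (cinner N x zeta) (cinner N x x).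
  rewrite !cinner_one_sub_inner; cbn [E_term Eb_term eval lsum eval_term]; unfold mono.
  destruct n as [| n]; cbn [pred Cpow]; rewrite ?INR_0; field; field_nonzero.
Qed.

Lemma Ebop_mono p q n x : regular x ->
  Csum N (fun j => Cconj (x j) * dzb_mono j p q n x) = eval (Eb_term (Term 1 p q n)) x.
Proof.
  intros Hx; pose proof (regular_conj x Hx) as Hx'.
  rewrite (Csum_ext N _ (fun j => INR q * mono p (S q) n x * (zeta j * Cconj (x j))
                                + - (INR n * mono p q (pred n) x) * (x j * Cconj (x j))))
    by (intros; unfold dzb_mono; ring).
  rewrite Csum_plus, !Csum_scal; fold (cinner N zeta x) (cinner N x x).
  rewrite !cinner_one_sub_inner; cbn [E_term Eb_term eval lsum eval_term]; unfold mono.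
  destruct n as [| n]; cbn [pred Cpow]; rewrite ?INR_0; field; field_nonzero.
Qed.

Lemma Eop_eval X x : regular x -> Eop N (eval X) x = eval (flat_map E_term X) x.
Proof.
  intros Hx; unfold Eop.
  rewrite (Csum_ext N _ (fun j => lsum (fun t => x j * dz_term j t x) X))
    by (intros; rewrite dz_eval, lsum_scal; auto).
  rewrite Csum_lsum, eval_flat_map; apply lsum_ext; intros [c p q n].
  cbn [dz_term].
  rewrite (Csum_ext N _ (fun j => c * (x j * dz_mono j p q n x))) by (intros; ring).
  rewrite Csum_scal, Eop_mono by exact Hx; cbn [E_term eval lsum eval_term]; ring.
Qed.

Lemma Ebop_eval X x : regular x -> Ebop N (eval X) x = eval (flat_map Eb_term X) x.
Proof.
  intros Hx; unfold Ebop.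
  rewrite (Csum_ext N _ (fun j => lsum (fun t => Cconj (x j) * dzb_term j t x) X))
    by (intros; rewrite dzb_eval, lsum_scal; auto).
  rewrite Csum_lsum, eval_flat_map; apply lsum_ext; intros [c p q n].
  cbn [dzb_term].
  rewrite (Csum_ext N _ (fun j => c * (Cconj (x j) * dzb_mono j p q n x))) by (intros; ring).
  rewrite Csum_scal, Ebop_mono by exact Hx; cbn [Eb_term eval lsum eval_term]; ring.
Qed.

Definition ddz_mono j p q n x : C :=
  INR q * zeta j * dz_mono j p (S q) n x
  - INR n * (mono p q (pred n) x + x j * dz_mono j p q (pred n) x).

Definition d2zb_mono j p q n x : C :=
  INR q * zeta j * dzb_mono j p (S q) n x - INR n * (x j * dzb_mono j p q (pred n) x).

Lemma is_wirtinger_dzb_mono x j p q n : (j < N)%nat -> regular x ->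
  is_wirtinger (fun w => dzb_mono j p q n (upd x j w)) (x j)
    (ddz_mono j p q n x) (d2zb_mono j p q n x).
Proof.
  intros Hj Hx; eapply is_wirtinger_ext.
  { intros v; unfold dzb_mono; rewrite (upd_eq x j v); reflexivity. }
  eapply is_wirtinger_val; [| | apply is_wirtinger_minus;
    [apply is_wirtinger_mult; [apply is_wirtinger_const | apply is_wirtinger_mono; auto]
    |apply is_wirtinger_mult;
      [apply is_wirtinger_mult; [apply is_wirtinger_const | apply is_wirtinger_id]
      |apply is_wirtinger_mono; auto]]];
    cbv beta; rewrite upd_same; unfold ddz_mono, d2zb_mono; ring.
Qed.

Definition Lap_term (t : term) : list term :=
  let 'Term c p q n := t in
  [Term (c * (INR q * INR p * cinner N zeta zeta)) (S p) (S q) n;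
   Term (- (c * (INR q * INR n))) p (S q) (pred n);
   Term (c * (INR q * INR n)) p q (pred n);
   Term (- (c * (INR n * INR N))) p q (pred n);
   Term (- (c * (INR n * INR p))) (S p) q (pred n);
   Term (c * (INR n * INR p)) p q (pred n);
   Term (c * (INR n * INR (pred n))) p q (pred (pred n));
   Term (- (c * (INR n * INR (pred n)))) p q (pred n)].

Lemma Lap_mono p q n x : regular x ->
  Csum N (fun j => ddz_mono j p q n x) = eval (Lap_term (Term 1 p q n)) x.
Proof.
  intros Hx; pose proof (regular_conj x Hx) as Hx'.
  rewrite (Csum_ext N _ (fun j =>
      INR q * INR p * mono (S p) (S q) n x * (zeta j * Cconj (zeta j))
    + - (INR q * INR n * mono p (S q) (pred n) x) * (zeta j * Cconj (x j))
    + - (INR n * mono p q (pred n) x)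
    + - (INR n * INR p * mono (S p) q (pred n) x) * (x j * Cconj (zeta j))
    + INR n * INR (pred n) * mono p q (pred (pred n)) x * (x j * Cconj (x j))))
    by (intros; unfold ddz_mono, dz_mono; ring).
  rewrite !Csum_plus, !Csum_scal, Csum_const.
  fold (cinner N zeta zeta) (cinner N zeta x) (cinner N x zeta) (cinner N x x).
  rewrite (cinner_one_sub_inner zeta x), (cinner_one_sub_inner x zeta), (cinner_one_sub_inner x x).
  cbn [Lap_term eval lsum eval_term]; unfold mono.
  destruct n as [| [| n]]; cbn [pred Cpow]; rewrite ?INR_0; field; field_nonzero.
Qed.

Definition ddz_term j (t : term) x : C := let 'Term c p q n := t in c * ddz_mono j p q n x.
Definition d2zb_term j (t : term) x : C := let 'Term c p q n := t in c * d2zb_mono j p q n x.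

Lemma dz_dzb_eval X x j : (j < N)%nat -> regular x ->
  dz j (dzb j (eval X)) x = lsum (fun t => ddz_term j t x) X.
Proof.
  intros Hj Hx.
  rewrite (agree_on_dz N regular regular_upd _ (fun y => lsum (fun t => dzb_term j t y) X) j Hj)
    by (auto; intros y Hy; apply dzb_eval; auto).
  apply (dz_dzb_of_wirtinger _ _ _ _ (lsum (fun t => d2zb_term j t x) X)).
  apply is_wirtinger_lsum; intros [c p q n]; cbn [dzb_term ddz_term d2zb_term].
  eapply is_wirtinger_val; [| | apply is_wirtinger_mult;
    [apply is_wirtinger_const | apply is_wirtinger_dzb_mono; auto]]; cbv beta; ring.
Qed.

Lemma Lap_eval X x : regular x -> Lap N (eval X) x = eval (flat_map Lap_term X) x.
Proof.
  intros Hx; unfold Lap.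
  rewrite (Csum_ext N _ (fun j => lsum (fun t => ddz_term j t x) X))
    by (intros; apply dz_dzb_eval; auto).
  rewrite Csum_lsum, eval_flat_map; apply lsum_ext; intros [c p q n].
  cbn [ddz_term]; rewrite Csum_scal, Lap_mono by exact Hx.
  cbn [Lap_term eval lsum eval_term]; ring.
Qed.

Definition absE_terms (s : C) (X : list term) : list term :=
  let Y := flat_map Eb_term X ++ scale s X in flat_map E_term Y ++ scale s Y.

Definition L_terms (s : C) (X : list term) : list term :=
  absE_terms s X ++ scale (Copp 1) (flat_map Lap_term X).

Lemma absEs_eval s F X : agree_on regular F (eval X) ->
  agree_on regular (absEs N s F) (eval (absE_terms (RtoC s) X)).
Proof.
  intros H x Hx; rewrite (agree_on_absEs N regular regular_upd s F (eval X) H x Hx).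
  unfold absEs, absE_terms; cbv zeta.
  assert (HY : agree_on regular (fun y => Ebop N (eval X) y + s * eval X y)
                                (eval (flat_map Eb_term X ++ scale s X))).
  { intros y Hy; rewrite eval_app, eval_scale, Ebop_eval; auto. }
  rewrite (agree_on_Eop N regular regular_upd _ _ HY x Hx), (HY x Hx), Eop_eval by exact Hx.
  rewrite (eval_app (flat_map E_term _)), eval_scale; reflexivity.
Qed.

Lemma Lop_eval s F X : agree_on regular F (eval X) ->
  agree_on regular (Lop N s F) (eval (L_terms (RtoC s) X)).
Proof.
  intros H x Hx; unfold Lop, L_terms.
  rewrite (absEs_eval s F X H x Hx), (agree_on_Lap N regular regular_upd F (eval X) H x Hx).
  rewrite Lap_eval, eval_app, eval_scale by exact Hx; ring.
Qed.

End Monomials.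

(** * Closed forms of the chains *)

Lemma Lchain_eval N zeta F X0 (X : nat -> list term) :
  agree_on (regular N zeta) F (eval N zeta X0) ->
  (forall x, regular N zeta x -> eval N zeta (L_terms N zeta 0 X0) x = eval N zeta (X 0%nat) x) ->
  (forall k x, regular N zeta x ->
     eval N zeta (L_terms N zeta (INR (S k)) (X k)) x = eval N zeta (X (S k)) x) ->
  forall k, agree_on (regular N zeta) (Lchain N k F) (eval N zeta (X k)).
Proof.
  intros H0 Hbase Hstep k; induction k as [| k IH]; intros x Hx; cbn [Lchain].
  - rewrite (Lop_eval N zeta 0 F X0 H0 x Hx); auto.
  - rewrite (Lop_eval N zeta _ _ _ IH x Hx); auto.
Qed.

Lemma INR_fact_S k : RtoC (INR (fact (S k))) = (INR k + 1) * INR (fact k).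
Proof.
  change (fact (S k)) with (S k * fact k)%nat.
  rewrite mult_INR, S_INR, RtoC_mult, RtoC_plus; reflexivity.
Qed.

Ltac expand_terms := cbn [flat_map E_term Eb_term Lap_term scale map app eval lsum eval_term pred].

Section ClosedForms.

Variable N : nat.
Variable z : vec.

Definition chain_kernel (k : nat) : list term :=
  let f := RtoC (INR (fact (S k))) in
  let tau := one_sub_inner N z z in
  [Term (f * f * tau ^ S k) (S (S k)) (S (S k)) 0;
   Term (- (f * f * tau ^ k)) (S k) (S (S k)) 0;
   Term (- (f * f * tau ^ k)) (S (S k)) (S k) 0;
   Term (f * f * tau ^ k
         + INR (fact k) * INR (fact k) * INR k * INR (S k) * cinner N z z * tau ^ pred k)
     (S k) (S k) 0].

Lemma chain_kernel_base x : regular N z x ->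
  eval N z (L_terms N z 0 [Term 1 1 1 0]) x = eval N z (chain_kernel 0) x.
Proof.
  intros Hx; pose proof (regular_conj N z x Hx) as Hx'.
  unfold chain_kernel, L_terms, absE_terms.
  expand_terms; cbn [fact Nat.mul Nat.add].
  rewrite (cinner_one_sub_inner N z z); unfold mono; cbn [Cpow].
  rewrite ?S_INR, ?INR_0, ?RtoC_plus; field; field_nonzero.
Qed.

Lemma chain_kernel_step k x : regular N z x ->
  eval N z (L_terms N z (INR (S k)) (chain_kernel k)) x = eval N z (chain_kernel (S k)) x.
Proof.
  intros Hx; pose proof (regular_conj N z x Hx) as Hx'.
  unfold chain_kernel, L_terms, absE_terms.
  expand_terms.
  rewrite !INR_fact_S, (cinner_one_sub_inner N z z); unfold mono.
  destruct k as [| k]; cbn [Cpow pred]; rewrite ?S_INR, ?INR_0, ?RtoC_plus;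
    field; field_nonzero.
Qed.

Definition chain_weighted (k : nat) : list term :=
  let tau := one_sub_inner N z z in
  [Term (INR (fact (S k)) * INR (fact (S k)) * tau ^ S k) (S (S k)) (S (S k)) 1;
   Term (INR (fact k) * INR (fact k) * INR (S k) * (INR N - INR (S k)) * tau ^ k) (S k) (S k) 0].

Lemma chain_weighted_base x : regular N z x ->
  eval N z (L_terms N z 0 [Term 1 1 1 1]) x = eval N z (chain_weighted 0) x.
Proof.
  intros Hx; pose proof (regular_conj N z x Hx) as Hx'.
  unfold chain_weighted, L_terms, absE_terms.
  expand_terms; cbn [fact Nat.mul Nat.add].
  rewrite (cinner_one_sub_inner N z z); unfold mono; cbn [Cpow].
  rewrite ?S_INR, ?INR_0, ?RtoC_plus; field; field_nonzero.
Qed.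

Lemma chain_weighted_step k x : regular N z x ->
  eval N z (L_terms N z (INR (S k)) (chain_weighted k)) x = eval N z (chain_weighted (S k)) x.
Proof.
  intros Hx; pose proof (regular_conj N z x Hx) as Hx'.
  unfold chain_weighted, L_terms, absE_terms.
  expand_terms.
  rewrite !INR_fact_S, (cinner_one_sub_inner N z z); unfold mono; cbn [Cpow].
  rewrite ?S_INR, ?INR_0, ?RtoC_plus; field; field_nonzero.
Qed.

Lemma chain_kernel_swap m xi : regular N z xi ->
  eval N z (chain_kernel (S m)) xi
  = eval N xi (absE_terms 0
      [Term (INR (fact (S m)) * INR (fact (S m))) (S (S m)) (S (S m)) (S (S m))]) z.
Proof.
  intros Hxi; pose proof (regular_conj N z xi Hxi) as Hxi'.
  unfold chain_kernel, absE_terms.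
  expand_terms.
  rewrite !INR_fact_S, (cinner_one_sub_inner N z z); unfold mono; cbn [Cpow].
  rewrite ?S_INR, ?INR_0, ?RtoC_plus; field; field_nonzero.
Qed.

Lemma chain_weighted_swap m xi : regular N z xi ->
  eval N z (chain_weighted (S m)) xi
  = eval N xi (L_terms N xi 0
      [Term (INR (fact (S m)) * INR (fact (S m))) (S (S m)) (S (S m)) (S (S m))]) z.
Proof.
  intros Hxi; pose proof (regular_conj N z xi Hxi) as Hxi'.
  unfold chain_weighted, L_terms, absE_terms.
  expand_terms.
  rewrite !INR_fact_S, (cinner_one_sub_inner N xi xi); unfold mono; cbn [Cpow].
  rewrite ?S_INR, ?INR_0, ?RtoC_plus; field; field_nonzero.
Qed.

End ClosedForms.

Close Scope C_scope.

Lemma cnorm2_cinner N x : RtoC (cnorm2 N x) = cinner N x x.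
Proof.
  unfold cnorm2, cinner.
  rewrite (Csum_ext N (fun k => x k * Cconj (x k))%C (fun k => RtoC (Cmod (x k) ^ 2)))
    by (intros; rewrite Cmod2_conj; auto).
  apply injective_projections; auto; simpl.
  induction N as [| N IH]; simpl in *; [reflexivity | rewrite <- IH; ring].
Qed.

Lemma Cmod_sq_one_sub_inner N x y :
  RtoC (Cmod (one_sub_inner N x y) ^ 2) = (one_sub_inner N x y * one_sub_inner N y x)%C.
Proof. rewrite Cmod2_conj, one_sub_inner_conj; reflexivity. Qed.

Lemma Cmod_pow_neq0 (c : C) n : c <> 0%C -> Cmod c ^ n <> 0.
Proof. intros Hc; apply pow_nonzero; intro E; apply Hc, Cmod_eq_0, E. Qed.

Lemma kernel_input_eval N z :
  agree_on (regular N z) (fun x => RtoC (/ (Cmod (Cminus (RtoC 1) (cinner N z x)) ^ 2)))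
    (eval N z [Term 1 1 1 0]).
Proof.
  intros x Hx; pose proof (regular_conj N z x Hx) as Hx'.
  change (Cminus (RtoC 1) (cinner N z x)) with (one_sub_inner N z x).
  rewrite RtoC_inv by (apply Cmod_pow_neq0; exact Hx').
  rewrite Cmod_sq_one_sub_inner; cbn [eval lsum eval_term]; unfold mono; cbn [Cpow].
  field; field_nonzero.
Qed.

Lemma kernel_weighted_input_eval N z :
  agree_on (regular N z)
    (fun x => RtoC ((1 - cnorm2 N x) / Cmod (Cminus (RtoC 1) (cinner N z x)) ^ 2))
    (eval N z [Term 1 1 1 1]).
Proof.
  intros x Hx; pose proof (regular_conj N z x Hx) as Hx'.
  change (Cminus (RtoC 1) (cinner N z x)) with (one_sub_inner N z x).
  rewrite RtoC_div by (apply Cmod_pow_neq0; exact Hx').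
  rewrite Cmod_sq_one_sub_inner, RtoC_minus, cnorm2_cinner; cbn [eval lsum eval_term].
  change (1 - cinner N x x)%C with (one_sub_inner N x x); unfold mono; cbn [Cpow].
  field; field_nonzero.
Qed.

Lemma kernel_output_eval N xi k :
  agree_on (regular N xi)
    (fun w => RtoC (INR (fact k) ^ 2 * (1 - cnorm2 N w) ^ S k
                    / Cmod (Cminus (RtoC 1) (cinner N w xi)) ^ (2 * S k)))
    (eval N xi [Term (INR (fact k) * INR (fact k)) (S k) (S k) (S k)]).
Proof.
  intros w Hw; pose proof (regular_conj N xi w Hw) as Hw'.
  change (Cminus (RtoC 1) (cinner N w xi)) with (one_sub_inner N w xi).
  rewrite pow_mult, RtoC_div by (apply pow_nonzero, Cmod_pow_neq0; exact Hw).
  rewrite (RtoC_pow (Cmod _ ^ 2)), Cmod_sq_one_sub_inner, RtoC_mult, !RtoC_pow, RtoC_minus,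
    cnorm2_cinner.
  change (1 - cinner N w w)%C with (one_sub_inner N w w).
  cbn [eval lsum eval_term]; unfold mono; rewrite Cpow_mult_l.
  field; field_nonzero.
Qed.

Lemma Re_cinner_le N x y : fst (cinner N x y) <= (cnorm2 N x + cnorm2 N y) / 2.
Proof.
  unfold cnorm2, cinner, Re; induction N as [| N IH]; cbn [Csum Cplus fst snd RtoC]; [lra |].
  rewrite !Cmod2_alt; unfold Re, Im in *.
  destruct (x N) as [a b], (y N) as [c d]; simpl in *.
  pose proof (Rle_0_sqr (a - c)); pose proof (Rle_0_sqr (b - d)); unfold Rsqr in *; nra.
Qed.

Lemma one_sub_inner_ball N x y : inBall N x -> inBall N y -> one_sub_inner N x y <> 0%C.
Proof.
  unfold inBall, one_sub_inner; intros Hx Hy E.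
  pose proof (Re_cinner_le N x y) as B; apply (f_equal fst) in E; simpl in E; lra.
Qed.

Theorem lemma2p1 (N m : nat) (hm : (1 <= m)%nat) (z xi : vec)
  (hz : inBall N z) (hxi : inBall N xi) :
  Lchain N m (fun x => RtoC (/ (Cmod (Cminus (RtoC 1) (cinner N z x)) ^ 2))) xi
  = absEs N 0 (fun w => RtoC (INR (fact m) ^ 2 * (1 - cnorm2 N w) ^ (m + 1)
          / Cmod (Cminus (RtoC 1) (cinner N w xi)) ^ (2 * (m + 1)))) z
  /\
  Lchain N m (fun x => RtoC ((1 - cnorm2 N x)
          / Cmod (Cminus (RtoC 1) (cinner N z x)) ^ 2)) xi
  = Lop N 0 (fun w => RtoC (INR (fact m) ^ 2 * (1 - cnorm2 N w) ^ (m + 1)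
          / Cmod (Cminus (RtoC 1) (cinner N w xi)) ^ (2 * (m + 1)))) z.
Proof.
  destruct m as [| m]; [lia |]; rewrite Nat.add_1_r.
  pose proof (one_sub_inner_ball N xi z hxi hz) as Hxi.
  pose proof (one_sub_inner_ball N z xi hz hxi) as Hz.
  split.
  - rewrite (Lchain_eval N z _ _ _ (kernel_input_eval N z) (chain_kernel_base N z)
               (chain_kernel_step N z) (S m) xi Hxi).
    rewrite (absEs_eval N xi 0 _ _ (kernel_output_eval N xi (S m)) z Hz).
    apply chain_kernel_swap, Hxi.
  - rewrite (Lchain_eval N z _ _ _ (kernel_weighted_input_eval N z) (chain_weighted_base N z)
               (chain_weighted_step N z) (S m) xi Hxi).
    rewrite (Lop_eval N xi 0 _ _ (kernel_output_eval N xi (S m)) z Hz).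
    apply chain_weighted_swap, Hxi.
Qed.
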